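(* For any $\sigma,\tau\in\mathbb{T}$ such that $[\![\sigma]\!]$ and $[\![\tau]\!]$ are defined, $\sigma=\tau$ (in $\mathbb{T}$) if and only if $[\![\sigma]\!]=[\![\tau]\!]$ (in $\mathbb{T}_C$).
   Context: \textbf{Source types.} $\mathbb{T}\ni\sigma ::= a\mid\omega\mid\sigma_1\to\sigma_2\mid\sigma_1\cap\sigma_2\mid\rho$, $\mathbb{T}_R\ni\rho ::= \langle\rangle\mid\langle l:\sigma\rangle\mid\rho_1+\rho_2\mid\rho_1\cap\rho_2$. Subtyping $\le$ on $\mathbb{T}$: least preorder with $\sigma\le\omega$; $\omega\le\omega\to\omega$; $\sigma\cap\tau\le\sigma,\tau$; $\sigma\le\tau_1,\sigma\le\tau_2\Rightarrow\sigma\le\tau_1\cap\tau_2$; $(\sigma\to\tau_1)\cap(\sigma\to\tau_2)\le\sigma\to\tau_1\cap\tau_2$; $\sigma_2\le\sigma_1,\tau_1\le\tau_2\Rightarrow\sigma_1\to\tau_1\le\sigma_2\to\tau_2$; $\langle l:\sigma\rangle\le\langle\rangle$; $\langle l:\sigma\rangle\cap\langle l:\tau\rangle\le\langle l:\sigma\cap\tau\rangle$; $\sigma\le\tau\Rightarrow\langle l:\sigma\rangle\le\langle l:\tau\rangle$; $\rho+\langle\rangle=\langle\rangle+\rho=\rho$; $(\rho_1+\rho_2)+\rho_3=\rho_1+(\rho_2+\rho_3)$; $(\rho_1\cap\rho_2)+\rho_3=(\rho_1+\rho_3)\cap(\rho_2+\rho_3)$; $\langle l:\sigma\rangle+(\langle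 l:\tau\rangle\cap\rho)=\langle l:\tau\rangle\cap\rho$; $\langle l:\sigma\rangle+(\langle l':\tau\rangle\cap\rho)=\langle l':\tau\rangle\cap(\langle l:\sigma\rangle+\rho)$ if $l\neq l'$; $\rho_1\le\rho_2\Rightarrow\rho_1+\rho\le\rho_2+\rho$; $\rho_1=\rho_2\Rightarrow\rho+\rho_1=\rho+\rho_2$. $\sigma=\tau$ means $\sigma\le\tau$ and $\tau\le\sigma$. \textbf{Target types.} $\mathbb{T}_C\ni\tau ::= a\mid\alpha\mid\omega\mid\tau_1\to\tau_2\mid\tau_1\cap\tau_2\mid c(\tau)$ ($c$ unary constructors) with subtyping given by the arrow/intersection axioms above plus $\tau_1\le\tau_2\Rightarrow c(\tau_1)\le c(\tau_2)$ and $c(\tau_1)\cap c(\tau_2)\le c(\tau_1\cap\tau_2)$; $=$ is equivalence. \textbf{Translation.} $\mathcal{L}$ is a fixed finite set of labels; constructors $\langle\!\langle\cdot\rangle\!\rangle$ and $l(\cdot)$ for $l\in\mathcal{L}$. Partial map $[\![\omega]\!]=\omega$, $[\![a]\!]=a$, $[\![\sigma\to\tau]\!]=[\![\sigma]\!]\to[\![\tau]\!]$, $[\![\sigma\cap\tau]\!]=[\![\sigma]\!]\cap[\![\tau]\!]$, $[\![\langle l:\tau\rangle]\!]=\langle\!\langle l([\![\tau]\!])\rangle\!\rangle$ for $l\in\mathcal{L}$, $[\![\langle\rangle]\!]=\langle\!\langle\omega\rangle\!\rangle$; it is undefined on types containing $+$. *)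

From mathcomp Require Import all_boot.
Set Implicit Arguments. Unset Strict Implicit. Unset Printing Implicit Defensive.

(* Source types T (records T_R are the subset singled out by [is_rec]). *)
Section Source.
Variables (A : Type) (Lab : eqType).

Inductive sty : Type :=
| SAtom : A -> sty
| SOmega : sty
| SArrow : sty -> sty -> sty
| SInter : sty -> sty -> sty       (* s /\ t  (also rho1 /\ rho2) *)
| REmpty : sty
| RField : Lab -> sty -> sty
| RPlus : sty -> sty -> sty.

Fixpoint is_rec (s : sty) : bool :=
  match s with
  | REmpty => true
  | RField _ _ => true
  | RPlus r1 r2 => is_rec r1 && is_rec r2
  | SInter r1 r2 => is_rec r1 && is_rec r2
  | _ => false
  end.

(* well-formedness: s belongs to the grammar of T (+ only between records) *)
Fixpoint wf (s : sty) : bool :=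
  match s with
  | SAtom _ | SOmega | REmpty => true
  | SArrow s1 s2 | SInter s1 s2 => wf s1 && wf s2
  | RField _ s1 => wf s1
  | RPlus r1 r2 => [&& is_rec r1, is_rec r2, wf r1 & wf r2]
  end.

Definition rec (s : sty) : bool := is_rec s && wf s.

Inductive ssub : sty -> sty -> Prop :=
| ss_refl s : wf s -> ssub s s
| ss_trans s t u : ssub s t -> ssub t u -> ssub s u
| ss_omega s : wf s -> ssub s SOmega
| ss_omega_arr : ssub SOmega (SArrow SOmega SOmega)
| ss_interl s t : wf s -> wf t -> ssub (SInter s t) s
| ss_interr s t : wf s -> wf t -> ssub (SInter s t) t
| ss_glb s t1 t2 : ssub s t1 -> ssub s t2 -> ssub s (SInter t1 t2)
| ss_arr_inter s t1 t2 : wf s -> wf t1 -> wf t2 ->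
    ssub (SInter (SArrow s t1) (SArrow s t2)) (SArrow s (SInter t1 t2))
| ss_arr s1 s2 t1 t2 : ssub s2 s1 -> ssub t1 t2 ->
    ssub (SArrow s1 t1) (SArrow s2 t2)
| ss_field_empty l s : wf s -> ssub (RField l s) REmpty
| ss_field_inter l s t : wf s -> wf t ->
    ssub (SInter (RField l s) (RField l t)) (RField l (SInter s t))
| ss_field l s t : ssub s t -> ssub (RField l s) (RField l t)
| ss_plus_empty_r1 r : rec r -> ssub (RPlus r REmpty) r
| ss_plus_empty_r2 r : rec r -> ssub r (RPlus r REmpty)
| ss_plus_empty_l1 r : rec r -> ssub (RPlus REmpty r) r
| ss_plus_empty_l2 r : rec r -> ssub r (RPlus REmpty r)
| ss_plus_assoc1 r1 r2 r3 : rec r1 -> rec r2 -> rec r3 ->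
    ssub (RPlus (RPlus r1 r2) r3) (RPlus r1 (RPlus r2 r3))
| ss_plus_assoc2 r1 r2 r3 : rec r1 -> rec r2 -> rec r3 ->
    ssub (RPlus r1 (RPlus r2 r3)) (RPlus (RPlus r1 r2) r3)
| ss_plus_distr1 r1 r2 r3 : rec r1 -> rec r2 -> rec r3 ->
    ssub (RPlus (SInter r1 r2) r3) (SInter (RPlus r1 r3) (RPlus r2 r3))
| ss_plus_distr2 r1 r2 r3 : rec r1 -> rec r2 -> rec r3 ->
    ssub (SInter (RPlus r1 r3) (RPlus r2 r3)) (RPlus (SInter r1 r2) r3)
| ss_plus_same1 l s t r : wf s -> wf t -> rec r ->
    ssub (RPlus (RField l s) (SInter (RField l t) r)) (SInter (RField l t) r)
| ss_plus_same2 l s t r : wf s -> wf t -> rec r ->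
    ssub (SInter (RField l t) r) (RPlus (RField l s) (SInter (RField l t) r))
| ss_plus_diff1 l l' s t r : l != l' -> wf s -> wf t -> rec r ->
    ssub (RPlus (RField l s) (SInter (RField l' t) r))
         (SInter (RField l' t) (RPlus (RField l s) r))
| ss_plus_diff2 l l' s t r : l != l' -> wf s -> wf t -> rec r ->
    ssub (SInter (RField l' t) (RPlus (RField l s) r))
         (RPlus (RField l s) (SInter (RField l' t) r))
| ss_plus_monol r1 r2 r : rec r1 -> rec r2 -> rec r ->
    ssub r1 r2 -> ssub (RPlus r1 r) (RPlus r2 r)
(* r1 = r2 => r + r1 = r + r2 (the converse inclusion is the symmetric instance) *)
| ss_plus_congr r r1 r2 : rec r -> rec r1 -> rec r2 ->
    ssub r1 r2 -> ssub r2 r1 -> ssub (RPlus r r1) (RPlus r r2).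

Definition seqv (s t : sty) : Prop := ssub s t /\ ssub t s.

End Source.

(* Target types T_C; unary constructors: <<.>> is [TCon None], l(.) is [TCon (Some l)] *)
Section Target.
Variables (A V : Type) (Lab : eqType).

Inductive tty : Type :=
| TAtom : A -> tty
| TVar : V -> tty
| TOmega : tty
| TArrow : tty -> tty -> tty
| TInter : tty -> tty -> tty
| TCon : option Lab -> tty -> tty.

Inductive tsub : tty -> tty -> Prop :=
| ts_refl s : tsub s s
| ts_trans s t u : tsub s t -> tsub t u -> tsub s u
| ts_omega s : tsub s TOmega
| ts_omega_arr : tsub TOmega (TArrow TOmega TOmega)
| ts_interl s t : tsub (TInter s t) s
| ts_interr s t : tsub (TInter s t) t
| ts_glb s t1 t2 : tsub s t1 -> tsub s t2 -> tsub s (TInter t1 t2)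
| ts_arr_inter s t1 t2 :
    tsub (TInter (TArrow s t1) (TArrow s t2)) (TArrow s (TInter t1 t2))
| ts_arr s1 s2 t1 t2 : tsub s2 s1 -> tsub t1 t2 ->
    tsub (TArrow s1 t1) (TArrow s2 t2)
| ts_con c s t : tsub s t -> tsub (TCon c s) (TCon c t)
| ts_con_inter c s t : tsub (TInter (TCon c s) (TCon c t)) (TCon c (TInter s t)).

Definition teqv (s t : tty) : Prop := tsub s t /\ tsub t s.

Fixpoint trans (calL : seq Lab) (s : sty A Lab) : option tty :=
  match s with
  | SOmega => Some TOmega
  | SAtom a => Some (TAtom a)
  | SArrow s1 s2 =>
      match trans calL s1, trans calL s2 with
      | Some t1, Some t2 => Some (TArrow t1 t2)
      | _, _ => None
      end
  | SInter s1 s2 =>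
      match trans calL s1, trans calL s2 with
      | Some t1, Some t2 => Some (TInter t1 t2)
      | _, _ => None
      end
  | RField l s1 =>
      if l \in calL then
        match trans calL s1 with
        | Some t1 => Some (TCon None (TCon (Some l) t1))
        | None => None
        end
      else None
  | REmpty => Some (TCon None TOmega)
  | RPlus _ _ => None
  end.

End Target.

From mathcomp Require Import all_boot.

Set Implicit Arguments. Unset Strict Implicit. Unset Printing Implicit Defensive.

(* (->) Extend [[.]] to a total interpretation of T in which rho1 + rho2 is the
   record with the fields of rho2 and those fields of rho1 whose label rho2
   lacks; every rule of T, including the record-concatenation equations, is
   sound for it.
   (<-) Read target types back into T, sending <<y>> to a record type built
   from the l(.)-components of y; this back-translation is monotone and
   inverts [[.]] wherever [[.]] is defined. *)

Arguments SAtom {A Lab}. Arguments SOmega {A Lab}. Arguments SArrow {A Lab}.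
Arguments SInter {A Lab}. Arguments REmpty {A Lab}. Arguments RField {A Lab}.
Arguments RPlus {A Lab}.
Arguments TAtom {A V Lab}. Arguments TOmega {A V Lab}. Arguments TArrow {A V Lab}.
Arguments TInter {A V Lab}. Arguments TCon {A V Lab}.

Ltac tsub_meet := repeat apply: ts_glb;
  solve [ apply: ts_refl | apply: ts_omega
        | apply: ts_con; tsub_meet
        | apply: ts_trans (ts_interl _ _) _; tsub_meet
        | apply: ts_trans (ts_interr _ _) _; tsub_meet ].

Section RecordView.
Variables (A V : Type) (Lab : eqType).
Notation T := (tty A V Lab).
Implicit Types (x y : T) (P Q : Lab -> bool).

Fixpoint rec_body x : T :=
  match x with
  | TCon None y => y
  | TInter x1 x2 => TInter (rec_body x1) (rec_body x2)
  | _ => TOmega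
  end.

Fixpoint has_field x l : bool :=
  match x with
  | TCon (Some l') _ => l' == l
  | TInter x1 x2 => has_field x1 l || has_field x2 l
  | _ => false
  end.

Fixpoint drop_fields P x : T :=
  match x with
  | TCon (Some l) y => if P l then TOmega else TCon (Some l) y
  | TInter x1 x2 => TInter (drop_fields P x1) (drop_fields P x2)
  | _ => x
  end.

Lemma tsub_rec_body x y : tsub x y -> tsub (rec_body x) (rec_body y).
Proof.
elim=> {x y} /=.
- by move=> *; apply: ts_refl.
- by move=> x y z _ xy _ yz; apply: ts_trans xy yz.
- by move=> *; apply: ts_omega.
- exact: ts_refl.
- by move=> *; apply: ts_interl.
- by move=> *; apply: ts_interr.
- by move=> *; apply: ts_glb.
- by move=> *; apply: ts_interl.
- by move=> *; apply: ts_refl.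
- by move=> [l|] x y xy _ //=; apply: ts_refl.
- by move=> [l|] x y /=; [apply: ts_interl | apply: ts_refl].
Qed.

Lemma tsub_drop_fields P x y : tsub x y -> tsub (drop_fields P x) (drop_fields P y).
Proof.
elim=> {x y} /=.
- by move=> *; apply: ts_refl.
- by move=> x y z _ xy _ yz; apply: ts_trans xy yz.
- by move=> *; apply: ts_omega.
- exact: ts_omega_arr.
- by move=> *; apply: ts_interl.
- by move=> *; apply: ts_interr.
- by move=> *; apply: ts_glb.
- by move=> *; apply: ts_arr_inter.
- by move=> *; apply: ts_arr.
- move=> [l|] x y xy _ /=; last exact: ts_con.
  by case: (P l); [apply: ts_refl | apply: ts_con].
- move=> [l|] x y /=; last exact: ts_con_inter.
  by case: (P l); [apply: ts_interl | apply: ts_con_inter].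
Qed.

Lemma has_field_tsub x y l : tsub x y -> has_field y l -> has_field x l.
Proof.
elim=> {x y} //=.
- by move=> x y z _ yx _ zy /zy /yx.
- by move=> x y ->.
- by move=> x y ->; rewrite orbT.
- by move=> x y1 y2 _ xy1 _ xy2 /orP[/xy1 | /xy2].
- by move=> [l'|] x y //=; rewrite orbb.
Qed.

Lemma eq_drop_fields P Q x : P =1 Q -> drop_fields P x = drop_fields Q x.
Proof.
move=> PQ; elim: x => //= [x1 -> x2 -> //|[l|] y _ //=].
by rewrite PQ.
Qed.

Lemma drop_fields_id P x : (forall l, P l = false) -> drop_fields P x = x.
Proof.
move=> P0; elim: x => //= [x1 -> x2 -> //|[l|] y _ //=].
by rewrite P0.
Qed.

Lemma drop_fieldsA P Q x :
  drop_fields P (drop_fields Q x) = drop_fields (fun l => Q l || P l) x.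
Proof.
elim: x => //= [x1 -> x2 -> //|[l|] y _ //=].
by case: (Q l).
Qed.

Lemma has_field_drop P x l : has_field (drop_fields P x) l = has_field x l && ~~ P l.
Proof.
elim: x => //= [x1 -> x2 ->|[l'|] y _ //=]; first by rewrite andb_orl.
by case: (eqVneq l' l) => [<-|/negbTE l'l]; case: (P l'); rewrite /= ?eqxx ?l'l.
Qed.

Lemma tcon_inter c x y : teqv (TCon c (TInter x y)) (TInter (TCon c x) (TCon c y)).
Proof. by split; [tsub_meet | apply: ts_con_inter]. Qed.

End RecordView.

Section Interpretation.
Variables (A V : Type) (Lab : eqType).
Notation S := (sty A Lab).
Notation T := (tty A V Lab).
Implicit Types (s t r : S).

Fixpoint interp s : T :=
  match s with
  | SAtom a => TAtom a
  | SOmega => TOmega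
  | SArrow s1 s2 => TArrow (interp s1) (interp s2)
  | SInter s1 s2 => TInter (interp s1) (interp s2)
  | REmpty => TCon None TOmega
  | RField l s1 => TCon None (TCon (Some l) (interp s1))
  | RPlus r1 r2 =>
      let b2 := rec_body (interp r2) in
      TCon None (TInter (drop_fields (has_field b2) (rec_body (interp r1))) b2)
  end.

Lemma interp_rec r : is_rec r -> teqv (interp r) (TCon None (rec_body (interp r))).
Proof.
elim: r => //= [r1 IH1 r2 IH2 /andP[/IH1[E1 E1'] /IH2[E2 E2']]|*|*|*];
  try by split; apply: ts_refl.
split; first apply: ts_trans _ (tcon_inter _ _ _).2.
  by apply: ts_glb; [apply: ts_trans _ E1 | apply: ts_trans _ E2]; tsub_meet.
apply: ts_trans (tcon_inter _ _ _).1 _.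
by apply: ts_glb; [apply: ts_trans _ E1' | apply: ts_trans _ E2']; tsub_meet.
Qed.

Lemma interp_plus_emptyr r : is_rec r -> teqv (interp (RPlus r REmpty)) (interp r).
Proof.
move=> /interp_rec[E E'] /=; rewrite drop_fields_id //.
split; first by apply: ts_trans _ E'; tsub_meet.
by apply: ts_trans E _; tsub_meet.
Qed.

Lemma interp_plus_emptyl r : is_rec r -> teqv (interp (RPlus REmpty r)) (interp r).
Proof.
move=> /interp_rec[E E'] /=.
split; first by apply: ts_trans _ E'; tsub_meet.
by apply: ts_trans E _; tsub_meet.
Qed.

Lemma interp_plusA r1 r2 r3 :
  teqv (interp (RPlus (RPlus r1 r2) r3)) (interp (RPlus r1 (RPlus r2 r3))).
Proof.
have dropE (x2 x3 : T) :
    drop_fields (fun l => has_field (drop_fields (has_field x3) x2) l || has_field x3 l)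
    =1 (fun x => drop_fields (has_field x3) (drop_fields (has_field x2) x)).
  move=> x; rewrite drop_fieldsA; apply: eq_drop_fields => l.
  by rewrite has_field_drop; case: (has_field x2 l); case: (has_field x3 l).
by rewrite /= dropE; split; tsub_meet.
Qed.

Lemma interp_plus_interl r1 r2 r3 :
  teqv (interp (RPlus (SInter r1 r2) r3))
       (interp (SInter (RPlus r1 r3) (RPlus r2 r3))).
Proof.
split=> /=; first by tsub_meet.
by apply: ts_trans (ts_con_inter _ _ _) _; tsub_meet.
Qed.

Lemma interp_plus_field_same l s t r : is_rec r ->
  teqv (interp (RPlus (RField l s) (SInter (RField l t) r)))
       (interp (SInter (RField l t) r)).
Proof.
move=> /interp_rec[E E'] /=; rewrite eqxx /=; split.
  by apply: ts_glb; [| apply: ts_trans _ E']; tsub_meet.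
apply: ts_trans (ts_glb (ts_interl _ _) (ts_trans (ts_interr _ _) E)) _.
by apply: ts_trans (ts_con_inter _ _ _) _; tsub_meet.
Qed.

Lemma interp_plus_field_diff l l' s t r : l != l' ->
  teqv (interp (RPlus (RField l s) (SInter (RField l' t) r)))
       (interp (SInter (RField l' t) (RPlus (RField l s) r))).
Proof.
move=> /negbTE ll' /=; rewrite eq_sym ll' /=.
split; first by tsub_meet.
by apply: ts_trans (ts_con_inter _ _ _) _; tsub_meet.
Qed.

Lemma interp_sound s t : ssub s t -> tsub (interp s) (interp t).
Proof.
elim=> {s t}.
- by move=> *; apply: ts_refl.
- by move=> s t u _ st _ tu; apply: ts_trans st tu.
- by move=> *; apply: ts_omega.
- exact: ts_omega_arr.
- by move=> *; apply: ts_interl.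
- by move=> *; apply: ts_interr.
- by move=> *; apply: ts_glb.
- by move=> *; apply: ts_arr_inter.
- by move=> *; apply: ts_arr.
- by move=> *; tsub_meet.
- move=> l s t _ _ /=; apply: ts_trans (ts_con_inter _ _ _) _.
  exact/ts_con/ts_con_inter.
- by move=> l s t _ st /=; apply/ts_con/ts_con.
- by move=> r /andP[/interp_plus_emptyr[]].
- by move=> r /andP[/interp_plus_emptyr[]].
- by move=> r /andP[/interp_plus_emptyl[]].
- by move=> r /andP[/interp_plus_emptyl[]].
- by move=> r1 r2 r3 *; case: (interp_plusA r1 r2 r3).
- by move=> r1 r2 r3 *; case: (interp_plusA r1 r2 r3).
- by move=> r1 r2 r3 *; case: (interp_plus_interl r1 r2 r3).
- by move=> r1 r2 r3 *; case: (interp_plus_interl r1 r2 r3).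
- by move=> l s t r _ _ /andP[/(interp_plus_field_same l s t)[]].
- by move=> l s t r _ _ /andP[/(interp_plus_field_same l s t)[]].
- by move=> l l' s t r /(interp_plus_field_diff s t r)[].
- by move=> l l' s t r /(interp_plus_field_diff s t r)[].
- move=> r1 r2 r _ _ _ _ r12 /=; apply/ts_con/ts_glb; last exact: ts_interr.
  by apply: ts_trans (ts_interl _ _) _; apply/tsub_drop_fields/tsub_rec_body.
- move=> r r1 r2 _ _ _ _ r12 _ r21 /=.
  have E : has_field (rec_body (interp r1)) =1 has_field (rec_body (interp r2)).
    by move=> l; apply/idP/idP; apply/has_field_tsub/tsub_rec_body.
  rewrite (eq_drop_fields _ E); apply/ts_con/ts_glb; first exact: ts_interl.
  by apply: ts_trans (ts_interr _ _) _; apply: tsub_rec_body.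
Qed.

End Interpretation.

Section BackTranslation.
Variables (A V : Type) (Lab : eqType).
Notation T := (tty A V Lab).
Implicit Types (x y : T).

Fixpoint back x : sty A Lab :=
  match x with
  | TAtom a => SAtom a
  | TArrow x1 x2 => SArrow (back x1) (back x2)
  | TInter x1 x2 => SInter (back x1) (back x2)
  | TCon None y => back_rec y
  | _ => SOmega
  end
with back_rec x : sty A Lab :=
  match x with
  | TCon (Some l) y => RField l (back y)
  | TInter x1 x2 => SInter (back_rec x1) (back_rec x2)
  | _ => REmpty
  end.

Lemma wf_back x : wf (back x) /\ wf (back_rec x).
Proof.
elim: x => //= [x1 [-> _] x2 [-> _] | x1 [-> ->] x2 [-> ->] | [l|] y []] //.
Qed.

Lemma back_rec_sub_empty x : ssub (back_rec x) REmpty.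
Proof.
elim: x => /= [a|v||x1 _ x2 _|x1 IH1 x2 _|[l|] y _]; try exact: ss_refl.
  exact: ss_trans (ss_interl (wf_back x1).2 (wf_back x2).2) IH1.
exact: ss_field_empty (wf_back y).1.
Qed.

Lemma back_mono x y : tsub x y ->
  ssub (back x) (back y) /\ ssub (back_rec x) (back_rec y).
Proof.
have Wb x : wf (back x) := (wf_back x).1.
have Wr x : wf (back_rec x) := (wf_back x).2.
elim=> {x y}.
- by move=> x; split; apply: ss_refl.
- move=> x y z _ [xy xy'] _ [yz yz'].
  by split; [apply: ss_trans xy yz | apply: ss_trans xy' yz'].
- by move=> x; split; [apply: ss_omega | apply: back_rec_sub_empty].
- by split; [apply: ss_omega_arr | apply: ss_refl].
- by move=> x y; split; apply: ss_interl.
- by move=> x y; split; apply: ss_interr.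
- by move=> x y1 y2 _ [xy1 xy1'] _ [xy2 xy2']; split; apply: ss_glb.
- by move=> x y1 y2; split; [apply: ss_arr_inter | apply: ss_interl].
- by move=> x1 x2 y1 y2 _ [x21 _] _ [y12 _]; split; [apply: ss_arr | apply: ss_refl].
- move=> [l|] x y _ [xy xy'] /=; split.
  + exact: ss_refl.
  + exact: ss_field.
  + exact: xy'.
  + exact: ss_refl.
- move=> [l|] x y /=; split.
  + exact: ss_omega.
  + exact: ss_field_inter.
  + by apply: ss_refl; rewrite /= !Wr.
  + exact: ss_interl.
Qed.

End BackTranslation.

Lemma trans_SomeE (A V : Type) (Lab : eqType) (calL : seq Lab) (s : sty A Lab) s' :
  trans V calL s = Some s' -> interp V s = s' /\ back s' = s.
Proof.
elim: s s' => /= [a||s1 IH1 s2 IH2|s1 IH1 s2 IH2||l s1 IH1|//] s'.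
- by case=> <-.
- by case=> <-.
- case: (trans V calL s1) IH1 => [t1|//] /(_ t1 erefl)[-> <-].
  by case: (trans V calL s2) IH2 => [t2|//] /(_ t2 erefl)[-> <-] [<-].
- case: (trans V calL s1) IH1 => [t1|//] /(_ t1 erefl)[-> <-].
  by case: (trans V calL s2) IH2 => [t2|//] /(_ t2 erefl)[-> <-] [<-].
- by case=> <-.
- case: (l \in calL) => //.
  by case: (trans V calL s1) IH1 => [t1|//] /(_ t1 erefl)[-> <-] [<-].
Qed.

Theorem lemma5p1 (A V : Type) (Lab : eqType) (calL : seq Lab)
  (s t : sty A Lab) (s' t' : tty A V Lab) :
  wf s -> wf t ->
  trans V calL s = Some s' -> trans V calL t = Some t' ->
  seqv s t <-> teqv s' t'.
Proof.
move=> _ _ /trans_SomeE[Is Bs] /trans_SomeE[It Bt]; split.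
- by rewrite -Is -It => -[st ts]; split; apply: interp_sound.
- rewrite -Bs -Bt => -[st ts].
  by split; [exact: (back_mono st).1 | exact: (back_mono ts).1].
Qed.
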